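(* In the setting described in the context, with the Poisson tensors $\pi_s$, $s=0,\dots,\alpha$, and the notation $h^{(k)}_j:=c^{(k)}_{1-j}$ for $j=0,-1,\dots,-\alpha+1$, for each $k\in\{1,\dots,m\}$ and each pair $0\le i<j\le\alpha$ one has the bi-Hamiltonian chain $$\pi_i\,dh^{(k)}_{-i}=0,\qquad \pi_i\,dh^{(k)}_{-i+r}=X^{(k)}_r=\pi_j\,dh^{(k)}_{-j+r}\ \ (r=1,\dots,n_k),\qquad \pi_j\,dh^{(k)}_{-j+n_k+1}=0.$$ In particular, for each $k$ there are $\binom{\alpha+1}{2}$ such bi-Hamiltonian chains.
   Context: Let $n,m\ge1$, $n_1,\dots,n_m\ge1$ integers with $n_1+\dots+n_m=n$, and $\alpha$ an integer with $1\le\alpha\le\min_k n_k$; set $N=\alpha m$. Let $\varphi_0,\varphi_1,\dots,\varphi_m$ be smooth functions of $(\lambda,\mu)$ with $\varphi_m\equiv1$. Consider the curve $$\varphi_0(\lambda,\mu)+\sum_{k=1}^m\varphi_k(\lambda,\mu)\,\psi_k(\lambda)=0,\qquad \psi_k(\lambda)=c^{(k)}_\alpha\lambda^{n_k-1+\alpha}+\dots+c^{(k)}_1\lambda^{n_k}+\sum_{i=1}^{n_k}a^{(k)}_i\lambda^{n_k-i}.$$ Taking $n$ copies with $(\lambda,\mu)$ replaced by $(\lambda_j,\mu_j)$, $j=1,\dots,n$, and solving (assumed possible on an open domain, with nondegenerate Jacobian) for the $a^{(k)}_i$ gives $a^{(k)}_i=h^{(k)}_i(\boldsymbol\lambda,\boldsymbol\mu,\mathbf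 c)$ on an open set $\mathcal M\subset\mathbb{R}^{2n+N}$ with coordinates $(\boldsymbol\lambda,\boldsymbol\mu,\mathbf c)$, $\mathbf c=(c^{(k)}_j)_{k\le m,\,j\le\alpha}$. Set $\pi_0=\sum_{i=1}^n\partial_{\lambda_i}\wedge\partial_{\mu_i}$, $X^{(k)}_i=\pi_0\,dh^{(k)}_i$, and for $s=0,\dots,\alpha$ $$\pi_s=\sum_{i=1}^n\lambda_i^s\frac{\partial}{\partial\lambda_i}\wedge\frac{\partial}{\partial\mu_i}+\sum_{k=1}^m\sum_{j=1}^s X^{(k)}_j\wedge\frac{\partial}{\partial c^{(k)}_{s-j+1}}.$$ *)

From HB Require Import structures.
From mathcomp Require Import all_boot all_order all_algebra.
From mathcomp Require Import all_classical all_reals all_analysis.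
Set Implicit Arguments. Unset Strict Implicit. Unset Printing Implicit Defensive.
Import Order.TTheory GRing.Theory Num.Theory.
Import numFieldNormedType.Exports.
Local Open Scope ring_scope.
Local Open Scope classical_set_scope.

Fixpoint Ck_on {R : realType} {V : normedModType R} (U : set V) (k : nat)
    (f : V -> R) : Prop :=
  match k with
  | 0%N => forall x, U x -> {for x, continuous f}
  | k'.+1 => (forall x, U x -> differentiable f x) /\
             forall v : V, Ck_on U k' (fun x => 'D_v f x)
  end.

Definition smooth_on {R : realType} {V : normedModType R} (U : set V)
  (f : V -> R) : Prop := forall k, Ck_on U k f.

Section Defs.
Variable R : realType.
Variables n m alpha : nat.
(* points of R^{2n+N}, N = alpha*m; coordinates indexed by nat:
   lambda_i (i<n) at i, mu_i at n+i,
   c^{(k)}_l (k : 'I_m 0-based, 1<=l<=alpha) at 2n + k*alpha + (l-1) *)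
Local Notation D := (n + n + m * alpha)%N.
Local Notation pt := 'rV[R]_D.

Definition ev (x : nat) : pt := \row_(e < D) (if val e == x then 1 else 0).
Definition crd (x : nat) (p : pt) : R := \sum_(e < D | val e == x) p 0 e.
Definition mu_idx (i : nat) : nat := (n + i)%N.
Definition c_idx (k : 'I_m) (l : nat) : nat := (n + n + k * alpha + l.-1)%N.

Definition pd (f : pt -> R) (x : nat) (p : pt) : R := 'D_(ev x) f p.
Definition dfv (f : pt -> R) (p : pt) (v : pt) : R :=
  \sum_(e < D) v 0 e * pd f e p.

(* Contraction convention: (A /\ B) df := df(B) A - df(A) B. *)
Definition pi0 (f : pt -> R) (p : pt) : pt :=
  \sum_(i < n) (pd f (mu_idx i) p *: ev i - pd f i p *: ev (mu_idx i)).

Definition Xf (h : 'I_m -> nat -> pt -> R) (k : 'I_m) (r : nat) (p : pt) : pt :=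
  pi0 (h k r) p.

Definition pis (h : 'I_m -> nat -> pt -> R) (s : nat) (f : pt -> R) (p : pt)
  : pt :=
  \sum_(i < n) (crd i p ^+ s) *: (pd f (mu_idx i) p *: ev i
                                   - pd f i p *: ev (mu_idx i))
  + \sum_(k < m) \sum_(1 <= j < s.+1)
      (pd f (c_idx k (s - j + 1)) p *: Xf h k j p
       - dfv f p (Xf h k j p) *: ev (c_idx k (s - j + 1))).

(* h^{(k)}_j for integer j: h^{(k)}_j (j >= 1) are the solved functions,
   h^{(k)}_j := c^{(k)}_{1-j} for j <= 0 (meaningful for j >= -alpha+1) *)
Definition Hk (h : 'I_m -> nat -> pt -> R) (k : 'I_m) (j : int) : pt -> R :=
  match j with
  | Posz (S r) => h k r.+1
  | Posz 0 => crd (c_idx k 1)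
  | Negz t => crd (c_idx k t.+2)
  end.

Definition psi (nk : nat) (c a : nat -> R) (x : R) : R :=
  \sum_(1 <= l < alpha.+1) c l * x ^+ (nk.-1 + l)
  + \sum_(1 <= i < nk.+1) a i * x ^+ (nk - i).

(* the j-th copy of the curve equation at p, with a^{(k)}_i = h k i p *)
Definition curve_eq (nk : 'I_m -> nat) (phi0 : R * R -> R)
  (phi : 'I_m -> R * R -> R) (h : 'I_m -> nat -> pt -> R) (p : pt) (j : nat)
  : Prop :=
  phi0 (crd j p, crd (mu_idx j) p)
  + \sum_(k < m) phi k (crd j p, crd (mu_idx j) p)
       * psi (nk k) (fun l => crd (c_idx k l) p) (fun i => h k i p) (crd j p)
  = 0.

(* nondegeneracy of the (linear) system in the a's at p: the n x n Jacobian
   w.r.t. (a^{(k)}_i) has trivial kernel *)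
Definition nondeg_system (nk : 'I_m -> nat) (phi : 'I_m -> R * R -> R)
  (p : pt) : Prop :=
  forall a : 'I_m -> nat -> R,
    (forall j, (j < n)%N ->
       \sum_(k < m) phi k (crd j p, crd (mu_idx j) p)
         * \sum_(1 <= i < (nk k).+1) a k i * crd j p ^+ (nk k - i) = 0) ->
    forall k i, (1 <= i <= nk k)%N -> a k i = 0.

End Defs.

From Pilot Require Import Defs.
From HB Require Import structures.
From mathcomp Require Import all_boot all_order all_algebra.
From mathcomp Require Import all_classical all_reals all_analysis.
From mathcomp Require Import zify ring.
Set Implicit Arguments. Unset Strict Implicit. Unset Printing Implicit Defensive.
Import Order.TTheory GRing.Theory Num.Theory.
Import numFieldNormedType.Exports.
Local Open Scope ring_scope.
Local Open Scope classical_set_scope.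

(* Write the n copies of the curve equation as a linear system A(p) a = b(p) in
   the unknowns a^{(k)}_i.  Nondegeneracy makes A(p) invertible, so by Cramer's
   rule the h^{(k)}_i are differentiable, and differentiating the equations
   shows that every derivative of h solves A(p) x = b' for an explicit b': a
   lambda_i- or mu_i-derivative only excites row i, a c^{(k)}_l-derivative gives
   the monomials lambda_j^(n_k-1+l).  Uniqueness of solutions then yields
   (i) {h_t, h_r}_0 = 0, since the lambda_i- and mu_i-derivatives of h are
   proportional, and (ii) pi_s dh^{(k)}_t = X^{(k)}_{t+s} (zero when t+s > n_k),
   since shifting the coefficients of the k-th block by s multiplies the system
   by lambda_j^s up to terms cancelled by the c-derivatives.  Together with
   pi_s dc^{(k)}_l = X^{(k)}_{s+1-l} (zero when l > s), every link of the chains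
   is an instance of these two formulas. *)

Lemma adj_mul_solution (R : comNzRingType) N (A : 'M[R]_N) (b g : 'I_N -> R) :
  (forall i, \sum_j A i j * g j = b i) ->
  forall j, \sum_i \adj A j i * b i = \det A * g j.
Proof.
move=> Ag j; under eq_bigr do rewrite -Ag mulr_sumr.
rewrite exchange_big /=.
transitivity (\sum_l (\adj A *m A) j l * g l).
  apply: eq_bigr => l _; rewrite mxE mulr_suml.
  by apply: eq_bigr => i _; rewrite mulrA.
rewrite mul_adj_mx (bigD1 j) //= big1 ?addr0; first by rewrite mxE eqxx mulr1n.
by move=> l /negPf lj; rewrite mxE eq_sym lj mulr0n mul0r.
Qed.

Lemma sum_shifted_coef (R : comNzRingType) (w : nat -> R) (x : R) (N s : nat) :
  (s <= N)%N -> (0 < N)%N ->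
  \sum_(1 <= t < N.+1) (if (t + s <= N)%N then w (t + s) else 0) * x ^+ (N - t)
  = x ^+ s * \sum_(1 <= t < N.+1) w t * x ^+ (N - t)
    - \sum_(1 <= r < s.+1) w r * x ^+ (N.-1 + (s - r + 1)).
Proof.
move=> sN N0.
rewrite mulr_sumr [in RHS](@big_cat_nat _ _ _ s.+1) /=; [|lia|lia].
have -> : \sum_(1 <= r < s.+1) x ^+ s * (w r * x ^+ (N - r))
   = \sum_(1 <= r < s.+1) w r * x ^+ (N.-1 + (s - r + 1)).
  by apply: eq_big_nat => r rs; rewrite mulrCA -exprD; congr (_ * x ^+ _); lia.
rewrite [X in X - _]addrC addrK.
rewrite [in LHS](@big_cat_nat _ _ _ (N - s).+1) /=; [|lia|lia].
rewrite [X in _ + X = _]big_nat_cond [X in _ + X = _]big1 ?addr0; last first.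
  by move=> t /andP[/andP[t1 t2] _]; rewrite ifF ?mul0r //; apply/negbTE; lia.
rewrite -{1}[s.+1]add1n big_addn subSn //.
apply: eq_big_nat => t ts; rewrite ifT; last lia.
by rewrite mulrCA -exprD; congr (w _ * x ^+ _); lia.
Qed.

Section LineDerivatives.
Variable R : realType.

(* Pointwise forms of [derivableD], [derivableM], [deriveMl] and [deriveMr],
   which are stated with function-ring operations and so do not unify with
   lambda terms. *)
Lemma derivable_add (V W : normedModType R) (f g : V -> W) x v :
  derivable f x v -> derivable g x v -> derivable (fun y => f y + g y) x v.
Proof. by move=> df dg; exact: derivableD df dg. Qed.

Lemma derivable_mul (V : normedModType R) (f g : V -> R) x v :
  derivable f x v -> derivable g x v -> derivable (fun y => f y * g y) x v.
Proof. by move=> df dg; exact: derivableM df dg. Qed.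

Lemma derive_cst_mul (V : normedModType R) (f : V -> R) c x v :
  derivable f x v -> 'D_v (fun y => c * f y) x = c * 'D_v f x.
Proof. exact: deriveMl. Qed.

Lemma derive_mul_cst (V : normedModType R) (f : V -> R) c x v :
  derivable f x v -> 'D_v (fun y => f y * c) x = 'D_v f x * c.
Proof. by move=> df; rewrite mulrC; exact: deriveMr. Qed.

Lemma derivable_big_sum (V W : normedModType R) (I : eqType) (r : seq I)
    (P : pred I) (F : I -> V -> W) x v :
  (forall i, i \in r -> P i -> derivable (F i) x v) ->
  derivable (fun y => \sum_(i <- r | P i) F i y) x v.
Proof.
elim: r => [|i r IH] dF; first by under eq_fun do rewrite big_nil; exact: derivable_cst.
under eq_fun do rewrite big_cons.
have dr : derivable (fun y => \sum_(j <- r | P j) F j y) x v.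
  by apply: IH => j jr; apply: dF; rewrite inE jr orbT.
by case Pi: (P i) => //; apply: derivable_add dr; apply: dF; rewrite ?inE ?eqxx.
Qed.

Lemma derive_big_sum (V W : normedModType R) (I : eqType) (r : seq I)
    (P : pred I) (F : I -> V -> W) x v :
  (forall i, i \in r -> P i -> derivable (F i) x v) ->
  'D_v (fun y => \sum_(i <- r | P i) F i y) x = \sum_(i <- r | P i) 'D_v (F i) x.
Proof.
elim: r => [|i r IH] dF.
  by under eq_fun do rewrite big_nil; rewrite big_nil; exact: derive_cst.
have dFr j : j \in r -> P j -> derivable (F j) x v.
  by move=> jr; apply: dF; rewrite inE jr orbT.
under eq_fun do rewrite big_cons; rewrite big_cons -(IH dFr).
case Pi: (P i) => //.
by apply: deriveD; [apply: dF; rewrite ?inE ?eqxx | exact: derivable_big_sum].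
Qed.

Lemma derivable_big_prod (V : normedModType R) (I : eqType) (r : seq I)
    (P : pred I) (F : I -> V -> R) x v :
  (forall i, i \in r -> P i -> derivable (F i) x v) ->
  derivable (fun y => \prod_(i <- r | P i) F i y) x v.
Proof.
elim: r => [|i r IH] dF; first by under eq_fun do rewrite big_nil; exact: derivable_cst.
under eq_fun do rewrite big_cons.
have dr : derivable (fun y => \prod_(j <- r | P j) F j y) x v.
  by apply: IH => j jr; apply: dF; rewrite inE jr orbT.
by case Pi: (P i) => //; apply: derivable_mul dr; apply: dF; rewrite ?inE ?eqxx.
Qed.

Lemma derivable_exprn (V : normedModType R) (f : V -> R) k x v :
  derivable f x v -> derivable (fun y => f y ^+ k) x v.
Proof.
move=> df; elim: k => [|k IH]; first by under eq_fun do rewrite expr0; exact: derivable_cst.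
by under eq_fun do rewrite exprS; exact: derivable_mul.
Qed.

Lemma derivable_det (V : normedModType R) N (A : V -> 'M[R]_N) x v :
  (forall i j, derivable (fun y => A y i j) x v) ->
  derivable (fun y => \det (A y)) x v.
Proof.
move=> dA; rewrite /determinant; apply: derivable_big_sum => s _ _.
apply: derivable_mul; first exact: derivable_cst.
by apply: derivable_big_prod => i _ _; exact: dA.
Qed.

(* Cramer's rule: the solution is (det A)^-1 adj A b near x. *)
Lemma derivable_linear_solution N (A : R -> 'M[R]_N) (b g : R -> 'I_N -> R) x :
  (forall i j, derivable (fun t => A t i j) x 1) ->
  (forall i, derivable (fun t => b t i) x 1) ->
  \det (A x) != 0 ->
  (\forall t \near x, forall i, \sum_j A t i j * g t j = b t i) ->
  forall j, derivable (fun t => g t j) x 1.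
Proof.
move=> dA db detA0 Agb j.
have ddet := derivable_det dA.
have det_near : \forall t \near x, \det (A t) != 0.
  have /derivable1_diffP/differentiable_continuous cdet := ddet.
  apply: (cdet [set y | y != 0]).
  by apply: open_nbhs_nbhs; split; [exact: open_neq | ].
pose cramer t := (\det (A t))^-1 * \sum_i \adj (A t) j i * b t i.
apply: (@near_eq_derivable _ _ _ cramer (fun t => g t j) x 1).
  near=> t; rewrite /cramer (@adj_mul_solution _ _ _ _ (g t)); last by near: t.
  by rewrite mulrA mulVf ?mul1r //; near: t.
apply: derivable_mul; first exact: derivableV.
apply: derivable_big_sum => i _ _; apply: derivable_mul => //.
under eq_fun do rewrite mxE /cofactor.
apply: derivable_mul; first exact: derivable_cst.
by apply: derivable_det => k l; under eq_fun do rewrite !mxE; exact: dA.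
Unshelve. all: by end_near.
Qed.

Lemma open_near_line (V : normedModType R) (M : set V) (p v : V) :
  open M -> M p -> \forall t \near (0 : R), M (t *: v + p).
Proof.
move=> oM Mp.
have line : (fun t : R => t *: v + p) @ 0 --> 0 *: v + p.
  by apply: cvgD; [exact: scalel_continuous | exact: cvg_cst].
rewrite scale0r add0r in line.
by apply: line; apply: open_nbhs_nbhs.
Qed.

Lemma derive_along_line (V : normedModType R) (f : V -> R) (p v : V) :
  'D_v f p = 'D_1 (fun t : R => f (t *: v + p)) 0.
Proof.
rewrite /derive; set g1 := fun h => h^-1 *: _; set g2 := fun h => h^-1 *: _.
suff -> : g1 = g2 by [].
by apply: funext => t; rewrite /g1 /g2 /= addr0 scale0r add0r [_%:A]mulr1.
Qed.

Lemma derive_affine (a b x : R) : 'D_1 (fun t : R => t * a + b) x = a.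
Proof.
have dta : derivable (fun t : R => t * a) x 1.
  by apply: derivable_mul; [exact: derivable_id | exact: derivable_cst].
rewrite (deriveD dta (derivable_cst b x 1)) derive_cst addr0.
rewrite (deriveM (@derivable_id _ _ x 1) (derivable_cst a x 1)) derive_cst derive_id.
by rewrite scaler0 add0r [_ *: _]mulr1.
Qed.

End LineDerivatives.

Section CurveSystem.
Variable R : realType.
Variables n m alpha : nat.
Local Notation D := (n + n + m * alpha)%N.
Local Notation pt := 'rV[R]_D.
Local Notation crd := (@crd R n m alpha).
Local Notation ev := (@ev R n m alpha).
Local Notation pd := (@pd R n m alpha).
Local Notation dfv := (@dfv R n m alpha).
Local Notation cI := (@c_idx n m alpha).
Local Notation muI := (mu_idx n).

Lemma crdD y (u w : pt) : crd y (u + w) = crd y u + crd y w.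
Proof. by rewrite /Defs.crd -big_split; apply: eq_bigr => e _; rewrite mxE. Qed.

Lemma crdZ y a (u : pt) : crd y (a *: u) = a * crd y u.
Proof. by rewrite /Defs.crd mulr_sumr; apply: eq_bigr => e _; rewrite mxE. Qed.

Lemma crd_ev y x : crd y (ev x) = ((x == y) && (y < D)%N)%:R.
Proof.
rewrite /Defs.crd; case: (ltnP y D) => yD.
  rewrite (big_pred1 (Ordinal yD)) => [|e /=]; last by apply/eqP/eqP => [?|->//]; apply: val_inj.
  by rewrite mxE /= eq_sym andbT; case: eqP.
rewrite big_pred0 ?andbF // => e; apply/negbTE/eqP => ey.
by move: (ltn_ord e); rewrite ey ltnNge yD.
Qed.

Lemma crd_ev_neq y x : x != y -> crd y (ev x) = 0.
Proof. by move=> /negbTE xy; rewrite crd_ev xy. Qed.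

Lemma pd_crd y x (p : pt) : pd (crd y) x p = crd y (ev x).
Proof.
rewrite /Defs.pd derive_along_line.
by under eq_fun do rewrite crdD crdZ; exact: derive_affine.
Qed.

Lemma derivable_crd_line y (v p : pt) (x : R) :
  derivable (fun t : R => crd y (t *: v + p)) x 1.
Proof.
under eq_fun do rewrite crdD crdZ.
apply: derivable_add; last exact: derivable_cst.
by apply: derivable_mul; [exact: derivable_id | exact: derivable_cst].
Qed.

Lemma c_idx_ge k l : (n + n <= cI k l)%N.
Proof. by rewrite /c_idx -addnA leq_addr. Qed.

Lemma c_idx_lt k l : (1 <= l <= alpha)%N -> (cI k l < D)%N.
Proof.
case/andP => l1 la; rewrite /c_idx -addnA ltn_add2l.
have : (k.+1 * alpha <= m * alpha)%N by rewrite leq_mul2r ltn_ord orbT.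
by rewrite mulSn => /(leq_trans _); apply; rewrite addnC ltn_add2r; lia.
Qed.

Lemma c_idx_inj k l k' l' : (1 <= l <= alpha)%N -> (1 <= l' <= alpha)%N ->
  cI k l = cI k' l' -> k = k' /\ l = l'.
Proof.
move=> /andP[l1 la] /andP[l1' la'] /eqP.
rewrite /c_idx -!addnA !eqn_add2l => /eqP E.
have a0 : (0 < alpha)%N by lia.
have lt1 : (l.-1 < alpha)%N by lia.
have lt2 : (l'.-1 < alpha)%N by lia.
have Ek := congr1 (divn^~ alpha) E; have El := congr1 (modn^~ alpha) E.
rewrite /= !divnMDl // !divn_small // !addn0 in Ek.
rewrite /= !modnMDl !modn_small // in El.
by split; [apply: val_inj | lia].
Qed.

Lemma crd_ev_c k l k' l' : (1 <= l <= alpha)%N -> (1 <= l' <= alpha)%N ->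
  crd (cI k l) (ev (cI k' l')) = ((k' == k) && (l' == l))%:R.
Proof.
move=> kl kl'; rewrite crd_ev c_idx_lt // andbT.
congr ((nat_of_bool _)%:R); apply/idP/idP => [/eqP/(c_idx_inj kl' kl)[-> ->]|/andP[/eqP-> /eqP->]].
  by rewrite !eqxx.
by [].
Qed.

Variable nk : 'I_m -> nat.

(* The n unknowns a^{(k)}_r, 1 <= r <= n_k, flattened into 'I_N. *)
Definition unknown := {k : 'I_m & 'I_(nk k)}.
Local Notation N := #|{: unknown}|.
Definition unk_k (c : 'I_N) : 'I_m := tag (enum_val c).
Definition unk_r (c : 'I_N) : nat := (tagged (enum_val c)).+1.

Lemma sum_unknown (G : 'I_m -> nat -> R) :
  \sum_(k < m) \sum_(1 <= r < (nk k).+1) G k r = \sum_(c < N) G (unk_k c) (unk_r c).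
Proof.
transitivity (\sum_(k < m) \sum_(r : 'I_(nk k)) G k r.+1).
  by apply: eq_bigr => k _; rewrite big_add1 /= big_mkord.
rewrite (sig_big_dep xpredT (fun _ => xpredT) (fun k (r : 'I_(nk k)) => G k r.+1)) /=.
rewrite (reindex (@enum_val unknown (pred_of_simpl predT))) //.
exact/onW_bij/enum_val_bij.
Qed.

Lemma unk_inj (c c' : 'I_N) : unk_k c = unk_k c' -> unk_r c = unk_r c' -> c = c'.
Proof.
rewrite /unk_k /unk_r => Ek Er; apply: enum_val_inj; move: Ek Er.
case: (enum_val c) => k r; case: (enum_val c') => k' r' /= Ek.
by subst k' => -[Er]; congr Tagged; exact: val_inj.
Qed.

Lemma unk_r_range c : (1 <= unk_r c <= nk (unk_k c))%N.
Proof. by rewrite /unk_r /unk_k; case: (enum_val c) => k r /=. Qed.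

Lemma unk_surj k r : (1 <= r <= nk k)%N -> exists c, unk_k c = k /\ unk_r c = r.
Proof.
case/andP => r1 rn; have rlt : (r.-1 < nk k)%N by rewrite prednK.
exists (enum_rank (Tagged (fun k => 'I_(nk k)) (Ordinal rlt))).
by rewrite /unk_k /unk_r enum_rankK /= prednK.
Qed.

Hypothesis sum_nk : (\sum_(k < m) nk k)%N = n.

Lemma card_unknown : N = n.
Proof.
rewrite card_tagged sumnE big_map big_enum /= -sum_nk.
by apply: eq_bigr => k _; rewrite card_ord.
Qed.

Variable phi : 'I_m -> R * R -> R.

Definition node (q : pt) (j : nat) : R * R := (crd j q, crd (muI j) q).

(* The part of the curve equation at x = (lambda, mu) that is linear in the
   unknowns a^{(k)}_i, and the part that is linear in the c^{(k)}_l of v. *)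
Definition lhs_row (x : R * R) (a : 'I_m -> nat -> R) : R :=
  \sum_(k < m) phi k x * \sum_(1 <= i < (nk k).+1) a k i * x.1 ^+ (nk k - i).

Definition c_row (x : R * R) (v : pt) : R :=
  \sum_(k < m) phi k x
     * \sum_(1 <= l < alpha.+1) crd (cI k l) v * x.1 ^+ ((nk k).-1 + l).

Lemma lhs_rowD x a b :
  lhs_row x (fun k i => a k i + b k i) = lhs_row x a + lhs_row x b.
Proof.
rewrite /lhs_row -big_split /=; apply: eq_bigr => k _; rewrite -mulrDr -big_split /=.
by congr (_ * _); apply: eq_bigr => i _; rewrite mulrDl.
Qed.

Lemma lhs_rowB x a b :
  lhs_row x (fun k i => a k i - b k i) = lhs_row x a - lhs_row x b.
Proof.
rewrite /lhs_row -sumrB; apply: eq_bigr => k _; rewrite -mulrBr -sumrB.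
by congr (_ * _); apply: eq_bigr => i _; rewrite mulrBl.
Qed.

Lemma lhs_rowZ x c a : lhs_row x (fun k i => c * a k i) = c * lhs_row x a.
Proof.
rewrite /lhs_row mulr_sumr; apply: eq_bigr => k _; rewrite mulrCA; congr (_ * _).
by rewrite mulr_sumr; apply: eq_bigr => i _; rewrite mulrA.
Qed.

Lemma lhs_rowZr x c a : lhs_row x (fun k i => a k i * c) = c * lhs_row x a.
Proof. by rewrite -lhs_rowZ; congr lhs_row; do 2!apply: funext => ?; rewrite mulrC. Qed.

Lemma lhs_row_sum x (T : Type) (r : seq T) (P : pred T) (F : T -> 'I_m -> nat -> R) :
  lhs_row x (fun k i => \sum_(y <- r | P y) F y k i) = \sum_(y <- r | P y) lhs_row x (F y).
Proof.
rewrite /lhs_row exchange_big; apply: eq_bigr => k _.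
by rewrite -mulr_sumr exchange_big; congr (_ * _); apply: eq_bigr => i _; rewrite mulr_suml.
Qed.

Lemma c_rowDZ x t (v w : pt) : c_row x (t *: v + w) = t * c_row x v + c_row x w.
Proof.
rewrite /c_row mulr_sumr -big_split /=; apply: eq_bigr => k _; rewrite mulrCA -mulrDr.
congr (_ * _); rewrite mulr_sumr -big_split /=; apply: eq_bigr => l _.
by rewrite crdD crdZ mulrDl mulrA.
Qed.

Lemma c_row_ev_c x k l : (1 <= l <= alpha)%N ->
  c_row x (ev (cI k l)) = phi k x * x.1 ^+ ((nk k).-1 + l).
Proof.
move=> kl; rewrite /c_row (bigD1 k) //= [X in _ + X]big1 ?addr0 => [|k' k'k].
  congr (_ * _); transitivity (\sum_(1 <= l' < alpha.+1 | l' == l) x.1 ^+ ((nk k).-1 + l')).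
    rewrite [RHS]big_mkcond; apply: eq_big_nat => l' kl'.
    by rewrite crd_ev_c // eqxx /= mulr_natl mulrb eq_sym.
  by rewrite big_nat1_eq; case: ifP => //; lia.
rewrite big_nat_cond big1 ?mulr0 // => l' /andP[kl' _].
by rewrite crd_ev_c // eq_sym (negbTE k'k) mul0r.
Qed.

Definition curve_mx (q : pt) : 'M[R]_N :=
  \matrix_(i, c) (phi (unk_k c) (node q i) * crd i q ^+ (nk (unk_k c) - unk_r c)).

Lemma lhs_row_mx q a (j : 'I_N) :
  lhs_row (node q j) a = \sum_c curve_mx q j c * a (unk_k c) (unk_r c).
Proof.
rewrite /lhs_row; under eq_bigr do rewrite mulr_sumr.
rewrite (sum_unknown (fun k i => phi k (node q j) * (a k i * crd j q ^+ (nk k - i)))).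
by apply: eq_bigr => c _; rewrite mxE [a _ _ * _]mulrC mulrA.
Qed.

Lemma det_curve_mx_neq0 q : nondeg_system nk phi q -> \det (curve_mx q) != 0.
Proof.
move=> nd; apply/negP => /eqP det0.
have /det0P[v vnz vA] : \det (curve_mx q)^T == 0 by rewrite det_tr det0.
pose a k i := \sum_(c | (unk_k c == k) && (unk_r c == i)) v 0 c.
have av c : a (unk_k c) (unk_r c) = v 0 c.
  rewrite /a (big_pred1 c) // => c' /=.
  by apply/andP/eqP => [[/eqP Ek /eqP Er]|->//]; exact: unk_inj.
have a0 : forall k i, (1 <= i <= nk k)%N -> a k i = 0.
  apply: nd => j jn; have jN : (j < N)%N by rewrite card_unknown.
  change (lhs_row (node q (Ordinal jN)) a = 0); rewrite lhs_row_mx.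
  have := congr1 (fun M : 'M[R]_(1, N) => M 0 (Ordinal jN)) vA.
  rewrite !mxE => /(eq_trans _); apply; apply: eq_bigr => c _.
  by rewrite av !mxE mulrC.
by move/eqP: vnz; apply; apply/rowP => c; rewrite mxE -av a0 // unk_r_range.
Qed.

Variable phi0 : R * R -> R.
Variable h : 'I_m -> nat -> pt -> R.
Variable M : set pt.
Variable U : set (R * R).
Hypothesis phi_diff : forall k x, U x -> differentiable (phi k) x.
Hypothesis phi0_diff : forall x, U x -> differentiable phi0 x.
Hypothesis M_open : open M.
Hypothesis nodes_in_U : forall p, M p -> forall j, (j < n)%N -> U (node p j).
Hypothesis curve : forall p, M p -> forall j, (j < n)%N -> curve_eq nk phi0 phi h p j.
Hypothesis nondeg : forall p, M p -> nondeg_system nk phi p.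

Lemma curve_eq_row q j : curve_eq nk phi0 phi h q j ->
  lhs_row (node q j) (fun k i => h k i q) = - (phi0 (node q j) + c_row (node q j) q).
Proof.
rewrite /curve_eq /psi; under eq_bigr do rewrite mulrDr.
by rewrite big_split addrA => /eqP; rewrite addrC addr_eq0 => /eqP.
Qed.

Lemma node_line p v j t : crd j v = 0 -> crd (muI j) v = 0 -> node (t *: v + p) j = node p j.
Proof. by move=> vj vmu; rewrite /node !crdD !crdZ vj vmu !mulr0 !add0r. Qed.

Lemma derivable_node_line (f : R * R -> R) j (v p : pt) :
  differentiable f (node p j) -> derivable (fun t : R => f (node (t *: v + p) j)) 0 1.
Proof.
move=> df; have /derivable1P := @diff_derivable _ _ _ f _ (node v j) df.
have -> // : (fun t : R => f (t *: node v j + node p j)) = (fun t => f (node (t *: v + p) j)).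
by apply: funext => t; rewrite /node !crdD !crdZ.
Qed.

Lemma derivable_h_line p v k r : M p -> (1 <= r <= nk k)%N ->
  derivable (fun t : R => h k r (t *: v + p)) 0 1.
Proof.
move=> Mp kr; have [c [<- <-]] := unk_surj kr.
have ltn_n (a : 'I_N) : (a < n)%N by rewrite -card_unknown.
pose line t := t *: v + p.
have drhs (a : 'I_N) :
    derivable (fun t => phi0 (node (line t) a) + c_row (node (line t) a) (line t)) 0 1.
  apply: derivable_add; first exact/derivable_node_line/phi0_diff/nodes_in_U.
  apply: derivable_big_sum => k' _ _; apply: derivable_mul.
    exact/derivable_node_line/phi_diff/nodes_in_U.
  apply: derivable_big_sum => l _ _.
  by apply: derivable_mul; [exact: derivable_crd_line | exact/derivable_exprn/derivable_crd_line].
apply: (@derivable_linear_solution _ _ (fun t => curve_mx (line t))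
  (fun t a => - (phi0 (node (line t) a) + c_row (node (line t) a) (line t)))
  (fun t c => h (unk_k c) (unk_r c) (line t))).
- move=> a c'; under eq_fun do rewrite mxE.
  apply: derivable_mul; last exact/derivable_exprn/derivable_crd_line.
  exact/derivable_node_line/phi_diff/nodes_in_U.
- by move=> a; exact: derivableN (drhs a).
- by rewrite /line scale0r add0r; exact/det_curve_mx_neq0/nondeg.
- apply: filterS (open_near_line v M_open Mp) => t Mt a.
  by rewrite -(lhs_row_mx _ (fun k i => h k i (line t))); exact/curve_eq_row/curve.
Qed.

Lemma derive_lhs_row x (a : R -> 'I_m -> nat -> R) t0 :
  (forall k i, (1 <= i <= nk k)%N -> derivable (fun t => a t k i) t0 1) ->
  'D_1 (fun t => lhs_row x (a t)) t0 = lhs_row x (fun k i => 'D_1 (fun t => a t k i) t0).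
Proof.
move=> da.
have dterm k i : i \in index_iota 1 (nk k).+1 ->
    derivable (fun t => a t k i * x.1 ^+ (nk k - i)) t0 1.
  by rewrite mem_index_iota => ki; apply: derivable_mul; [exact: da | exact: derivable_cst].
have drow k : derivable (fun t => \sum_(1 <= i < (nk k).+1) a t k i * x.1 ^+ (nk k - i)) t0 1.
  by apply: derivable_big_sum => i ki _; exact: dterm.
rewrite /lhs_row derive_big_sum => [|k _ _]; last first.
  by apply: derivable_mul; [exact: derivable_cst | exact: drow].
apply: eq_bigr => k _; rewrite derive_cst_mul // derive_big_sum => [|i ki _]; last exact: dterm.
by congr (_ * _); apply: eq_big_nat => i ki; rewrite derive_mul_cst //; apply: da.
Qed.

(* The j-th curve equation differentiated along v, which fixes the j-th node. *)
Lemma lhs_row_derive p v j : M p -> (j < n)%N -> crd j v = 0 -> crd (muI j) v = 0 ->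
  lhs_row (node p j) (fun k i => 'D_v (h k i) p) = - c_row (node p j) v.
Proof.
move=> Mp jn vj vmu.
have along := node_line p _ vj vmu.
have affine : \forall t \near 0, lhs_row (node p j) (fun k i => h k i (t *: v + p))
    = t * - c_row (node p j) v - (phi0 (node p j) + c_row (node p j) p).
  apply: filterS (open_near_line v M_open Mp) => t Mt.
  have := curve_eq_row (curve Mt jn); rewrite along c_rowDZ => ->; ring.
have -> : (fun k i => 'D_v (h k i) p) = (fun k i => 'D_1 (fun t : R => h k i (t *: v + p)) 0).
  by do 2!apply: funext => ?; exact: derive_along_line.
rewrite -derive_lhs_row => [|k i ki]; last exact: derivable_h_line.
by rewrite (near_eq_derive _ affine) derive_affine.
Qed.

Lemma lhs_row_pd_lambda_mu p i x j : M p -> (i < n)%N -> (x = i \/ x = muI i) ->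
  (j < n)%N -> j != i -> lhs_row (node p j) (fun k r => pd (h k r) x p) = 0.
Proof.
move=> Mp i_n hx jn /eqP ji.
have xi : (x < n + n)%N by case: hx => ->; rewrite /mu_idx; lia.
rewrite (lhs_row_derive Mp jn); first last.
- by apply: crd_ev_neq; apply/eqP; case: hx => ->; rewrite /mu_idx; lia.
- by apply: crd_ev_neq; apply/eqP; case: hx => ->; rewrite /mu_idx; lia.
rewrite /c_row big1 ?oppr0 // => k _; rewrite big1 ?mulr0 // => l _.
by rewrite crd_ev_neq ?mul0r //; apply/eqP; have := c_idx_ge k l; lia.
Qed.

Lemma lhs_row_pd_c p k l j : M p -> (1 <= l <= alpha)%N -> (j < n)%N ->
  lhs_row (node p j) (fun k' r => pd (h k' r) (cI k l) p)
   = - (phi k (node p j) * crd j p ^+ ((nk k).-1 + l)).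
Proof.
move=> Mp kl jn; have := c_idx_ge k l => cge.
rewrite (lhs_row_derive Mp jn) ?c_row_ev_c //.
  by apply: crd_ev_neq; apply/eqP; lia.
by apply: crd_ev_neq; apply/eqP; rewrite /mu_idx; lia.
Qed.


Hypothesis nk_ge_alpha : forall k, (alpha <= nk k)%N.
Hypothesis nk_gt0 : forall k, (0 < nk k)%N.

(* Both sides solve the same nondegenerate system: the lambda_i- and
   mu_i-derivatives only excite row i, and the c-derivatives supply exactly the
   monomials lost when the coefficients are shifted by s. *)
Lemma pd_h_shift p i x s : M p -> (i < n)%N -> (x = i \/ x = muI i) -> (s <= alpha)%N ->
  forall k t, (1 <= t <= nk k)%N ->
  (if (t + s <= nk k)%N then pd (h k (t + s)) x p else 0) =
   crd i p ^+ s * pd (h k t) x p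
   + \sum_(k' < m) \sum_(1 <= r < s.+1) pd (h k t) (cI k' (s - r + 1)) p * pd (h k' r) x p.
Proof.
move=> Mp i_n hx sa.
pose w k r := pd (h k r) x p.
pose z k t := (if (t + s <= nk k)%N then w k (t + s) else 0)
  - (crd i p ^+ s * w k t + \sum_(k' < m) \sum_(1 <= r < s.+1)
        pd (h k t) (cI k' (s - r + 1)) p * w k' r).
suff z0 : forall k t, (1 <= t <= nk k)%N -> z k t = 0.
  by move=> k t kt; apply/eqP; rewrite -subr_eq0; apply/eqP; exact: z0.
apply: (nondeg Mp) => j jn; change (lhs_row (node p j) z = 0).
pose X := \sum_(k < m) phi k (node p j)
  * \sum_(1 <= r < s.+1) w k r * crd j p ^+ ((nk k).-1 + (s - r + 1)).
have shifted : lhs_row (node p j) (fun k t => if (t + s <= nk k)%N then w k (t + s) else 0)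
    = crd j p ^+ s * lhs_row (node p j) w - X.
  rewrite /lhs_row /X mulr_sumr -sumrB; apply: eq_bigr => k _ /=.
  by rewrite sum_shifted_coef ?(leq_trans sa) // mulrBr mulrCA.
have c_part : lhs_row (node p j) (fun k t => \sum_(k' < m) \sum_(1 <= r < s.+1)
        pd (h k t) (cI k' (s - r + 1)) p * w k' r) = - X.
  rewrite lhs_row_sum /X -sumrN; apply: eq_bigr => k' _.
  rewrite lhs_row_sum mulr_sumr -sumrN; apply: eq_big_nat => r rs.
  by rewrite lhs_rowZr lhs_row_pd_c //; [rewrite mulrN mulrCA | lia].
rewrite /z lhs_rowB lhs_rowD lhs_rowZ shifted c_part.
have [-> | ji] := eqVneq j i; first ring.
by rewrite (lhs_row_pd_lambda_mu Mp i_n hx jn ji); ring.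
Qed.

(* The lambda_i- and mu_i-derivatives of h solve the system with right-hand
   side supported on row i only, hence are proportional. *)
Lemma pd_h_lambda_mu_comm p i k t k' r : M p -> (i < n)%N ->
  (1 <= t <= nk k)%N -> (1 <= r <= nk k')%N ->
  pd (h k' r) (muI i) p * pd (h k t) i p = pd (h k' r) i p * pd (h k t) (muI i) p.
Proof.
move=> Mp i_n kt k'r.
pose dl k r := pd (h k r) i p.
pose dm k r := pd (h k r) (muI i) p.
have dl0 j : (j < n)%N -> j != i -> lhs_row (node p j) dl = 0.
  by move=> jn ji; apply: (lhs_row_pd_lambda_mu Mp i_n) => //; left.
have dm0 j : (j < n)%N -> j != i -> lhs_row (node p j) dm = 0.
  by move=> jn ji; apply: (lhs_row_pd_lambda_mu Mp i_n) => //; right.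
have [li0 | li_neq0] := eqVneq (lhs_row (node p i) dl) 0.
  have dl_eq0 : forall k r, (1 <= r <= nk k)%N -> dl k r = 0.
    apply: (nondeg Mp) => j jn; change (lhs_row (node p j) dl = 0).
    by have [-> //|] := eqVneq j i; exact: dl0.
  by rewrite -/(dl k t) -/(dl k' r) !dl_eq0 // mulr0 mul0r.
pose c := lhs_row (node p i) dm / lhs_row (node p i) dl.
have dm_dl : forall k r, (1 <= r <= nk k)%N -> dm k r - c * dl k r = 0.
  apply: (nondeg Mp) => j jn.
  change (lhs_row (node p j) (fun k r => dm k r - c * dl k r) = 0).
  rewrite lhs_rowB lhs_rowZ.
  have [-> |ji] := eqVneq j i; first by rewrite /c mulfVK // subrr.
  by rewrite dl0 // dm0 // mulr0 subrr.
have dmE k0 r0 : (1 <= r0 <= nk k0)%N -> dm k0 r0 = c * dl k0 r0.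
  by move=> kr0; apply/eqP; rewrite -subr_eq0 dm_dl.
rewrite -/(dm k t) -/(dm k' r) (dmE k t) // (dmE k' r) // /dl; ring.
Qed.

Lemma dfvD f p (u w : pt) : dfv f p (u + w) = dfv f p u + dfv f p w.
Proof. by rewrite /Defs.dfv -big_split; apply: eq_bigr => e _; rewrite mxE mulrDl. Qed.

Lemma dfv0 f p : dfv f p 0 = 0.
Proof. by rewrite /Defs.dfv big1 // => e _; rewrite mxE mul0r. Qed.

Lemma dfvZ f p c (u : pt) : dfv f p (c *: u) = c * dfv f p u.
Proof. by rewrite /Defs.dfv mulr_sumr; apply: eq_bigr => e _; rewrite mxE mulrA. Qed.

Lemma dfv_ev f p x : (x < D)%N -> dfv f p (ev x) = pd f x p.
Proof.
move=> xD; rewrite /Defs.dfv (bigD1 (Ordinal xD)) //= big1 ?addr0.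
  by rewrite mxE eqxx mul1r.
move=> e ne; rewrite mxE; case: eqP => [E|]; last by rewrite mul0r.
by move: ne; rewrite -val_eqE /= E eqxx.
Qed.

Definition hamvec (a b : nat -> R) : pt := \sum_(i < n) (a i *: ev i - b i *: ev (muI i)).

Lemma Xf_hamvec k j p :
  Xf h k j p = hamvec (fun i => pd (h k j) (muI i) p) (fun i => pd (h k j) i p).
Proof. by []. Qed.

Lemma hamvec0 : hamvec (fun _ => 0) (fun _ => 0) = 0.
Proof. by rewrite /hamvec big1 // => i _; rewrite !scale0r subrr. Qed.

Lemma hamvecD a b a' b' :
  hamvec a b + hamvec a' b' = hamvec (fun i => a i + a' i) (fun i => b i + b' i).
Proof.
rewrite /hamvec -big_split /=; apply: eq_bigr => i _.
by rewrite !scalerDl opprD addrACA.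
Qed.

Lemma hamvecZ c a b : c *: hamvec a b = hamvec (fun i => c * a i) (fun i => c * b i).
Proof. by rewrite /hamvec scaler_sumr; apply: eq_bigr => i _; rewrite scalerBr !scalerA. Qed.

Lemma hamvec_sum (T : Type) (r : seq T) (P : pred T) (A B : T -> nat -> R) :
  \sum_(y <- r | P y) hamvec (A y) (B y)
  = hamvec (fun i => \sum_(y <- r | P y) A y i) (fun i => \sum_(y <- r | P y) B y i).
Proof.
rewrite /hamvec exchange_big /=; apply: eq_bigr => i _.
by rewrite !scaler_suml -sumrB.
Qed.

Lemma eq_hamvec a b a' b' : (forall i, (i < n)%N -> a i = a' i) ->
  (forall i, (i < n)%N -> b i = b' i) -> hamvec a b = hamvec a' b'.
Proof. by move=> Ea Eb; apply: eq_bigr => i _; rewrite Ea ?Eb. Qed.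

Lemma dfv_hamvec f p a b :
  dfv f p (hamvec a b) = \sum_(i < n) (a i * pd f i p - b i * pd f (muI i) p).
Proof.
rewrite (big_morph (dfv f p) (dfvD f p) (dfv0 f p)); apply: eq_bigr => i _.
rewrite dfvD -scaleN1r !dfvZ !dfv_ev; first by rewrite mulN1r.
all: by have := ltn_ord i; rewrite /mu_idx; lia.
Qed.

Lemma h_poisson_commute p k t k' r : M p -> (1 <= t <= nk k)%N -> (1 <= r <= nk k')%N ->
  dfv (h k t) p (Xf h k' r p) = 0.
Proof.
move=> Mp kt k'r; rewrite Xf_hamvec dfv_hamvec big1 // => i _.
by rewrite (pd_h_lambda_mu_comm Mp (ltn_ord i) kt k'r) subrr.
Qed.

Lemma pis_h p k s t : M p -> (s <= alpha)%N -> (1 <= t <= nk k)%N ->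
  pis h s (h k t) p = if (t + s <= nk k)%N then Xf h k (t + s) p else 0.
Proof.
move=> Mp sa kt.
transitivity (hamvec (fun i => if (t + s <= nk k)%N then pd (h k (t + s)) (muI i) p else 0)
                     (fun i => if (t + s <= nk k)%N then pd (h k (t + s)) i p else 0)); last first.
  by case: ifP => _; [symmetry; exact: Xf_hamvec | rewrite hamvec0].
rewrite /pis.
have -> : \sum_(i < n) crd i p ^+ s *: (pd (h k t) (muI i) p *: ev i - pd (h k t) i p *: ev (muI i))
   = hamvec (fun i => crd i p ^+ s * pd (h k t) (muI i) p)
            (fun i => crd i p ^+ s * pd (h k t) i p).
  by apply: eq_bigr => i _; rewrite scalerBr !scalerA.
have -> : \sum_(k' < m) \sum_(1 <= j < s.+1)
      (pd (h k t) (cI k' (s - j + 1)) p *: Xf h k' j p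
       - dfv (h k t) p (Xf h k' j p) *: ev (cI k' (s - j + 1)))
   = \sum_(k' < m) \sum_(1 <= j < s.+1)
      hamvec (fun i => pd (h k t) (cI k' (s - j + 1)) p * pd (h k' j) (muI i) p)
             (fun i => pd (h k t) (cI k' (s - j + 1)) p * pd (h k' j) i p).
  apply: eq_bigr => k' _; apply: eq_big_nat => j js.
  rewrite h_poisson_commute ?scale0r ?subr0 ?Xf_hamvec ?hamvecZ //.
  by have := nk_ge_alpha k'; lia.
under eq_bigr do rewrite hamvec_sum.
rewrite hamvec_sum hamvecD; apply: eq_hamvec => i i_n.
  by rewrite (pd_h_shift Mp i_n _ sa) //; right.
by rewrite (pd_h_shift Mp i_n _ sa) //; left.
Qed.

Lemma pis_c p k l s : (1 <= l <= alpha)%N -> (s <= alpha)%N ->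
  pis h s (crd (cI k l)) p = if (l <= s)%N then Xf h k (s + 1 - l) p else 0.
Proof.
move=> kl sa; have cge := c_idx_ge k l.
have pd_lam (i : 'I_n) : pd (crd (cI k l)) i p = 0.
  by rewrite pd_crd crd_ev_neq //; apply/eqP; have := ltn_ord i; lia.
have pd_mu (i : 'I_n) : pd (crd (cI k l)) (muI i) p = 0.
  by rewrite pd_crd crd_ev_neq //; apply/eqP; have := ltn_ord i; rewrite /mu_idx; lia.
have dfvX k' j : dfv (crd (cI k l)) p (Xf h k' j p) = 0.
  by rewrite Xf_hamvec dfv_hamvec big1 // => i _; rewrite pd_lam pd_mu !mulr0 subrr.
rewrite /pis big1 ?add0r => [|i _]; last by rewrite pd_lam pd_mu !scale0r subrr scaler0.
rewrite (bigD1 k) //= [X in _ + X]big1 ?addr0 => [|k' k'k]; last first.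
  rewrite big_nat_cond big1 // => j /andP[js _].
  have jl : (1 <= s - j + 1 <= alpha)%N by lia.
  by rewrite dfvX scale0r subr0 pd_crd crd_ev_c // (negbTE k'k) scale0r.
transitivity (\sum_(1 <= j < s.+1 | j == (s + 1 - l)%N) Xf h k j p).
  rewrite [RHS]big_mkcond; apply: eq_big_nat => j js.
  have jl : (1 <= s - j + 1 <= alpha)%N by lia.
  rewrite dfvX scale0r subr0 pd_crd crd_ev_c // eqxx /= scaler_nat mulrb.
  by have -> : ((s - j + 1)%N == l) = (j == (s + 1 - l)%N) by apply/eqP/eqP; lia.
by rewrite big_nat1_eq; case: ifP; case: ifP => //; lia.
Qed.

Lemma Hk_opp k i : Hk h k (- (i%:Z)) = crd (cI k i.+1).
Proof. by case: i. Qed.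

Lemma Hk_subn k a b :
  Hk h k (a%:Z - b%:Z) = if (b < a)%N then h k (a - b)%N else crd (cI k (b - a).+1).
Proof.
case: ltnP => ab; last by rewrite -opprB (subzn ab) Hk_opp.
by rewrite (subzn (ltnW ab)) -(subnSK ab).
Qed.

Lemma pis_Hk p k s r : M p -> (s <= alpha)%N -> (1 <= r <= nk k)%N ->
  pis h s (Hk h k (r%:Z - s%:Z)) p = Xf h k r p.
Proof.
move=> Mp sa kr; rewrite Hk_subn; case: ltnP => sr.
  rewrite pis_h //; last lia.
  by rewrite subnK ?(ltnW sr) // ifT //; case/andP: kr.
rewrite pis_c //; last lia.
have -> : (s + 1 - (s - r).+1)%N = r by lia.
by rewrite ifT //; lia.
Qed.

Lemma bihamiltonian_chain k i j : (i < j <= alpha)%N -> forall p, M p ->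
  [/\ pis h i (Hk h k (- (i%:Z))) p = 0,
      (forall r, (1 <= r <= nk k)%N ->
         pis h i (Hk h k (r%:Z - i%:Z)) p = Xf h k r p
         /\ Xf h k r p = pis h j (Hk h k (r%:Z - j%:Z)) p)
    & pis h j (Hk h k ((nk k)%:Z + 1 - j%:Z)) p = 0].
Proof.
move=> /andP[ij ja] p Mp; have nka := nk_ge_alpha k.
split.
- by rewrite Hk_opp pis_c ?ltnn //; lia.
- by move=> r kr; split; [|symmetry]; apply: pis_Hk => //; lia.
have -> : (nk k)%:Z + 1 - j%:Z = (nk k).+1%:Z - j%:Z by rewrite -addn1 PoszD.
rewrite Hk_subn ifT; last lia.
rewrite pis_h //; last lia.
by rewrite subnK ?ltnn; last lia.
Qed.

End CurveSystem.

Theorem corollary14 (R : realType) (n m alpha : nat) (nk : 'I_m -> nat)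
  (phi0 : R * R -> R) (phi : 'I_m -> R * R -> R) (U : set (R * R))
  (M : set 'rV[R]_(n + n + m * alpha))
  (h : 'I_m -> nat -> 'rV[R]_(n + n + m * alpha) -> R) :
  (0 < n)%N -> (0 < m)%N -> (forall k, 0 < nk k)%N ->
  (\sum_(k < m) nk k)%N = n ->
  (1 <= alpha)%N -> (forall k, alpha <= nk k)%N ->
  open U -> smooth_on U phi0 -> (forall k, smooth_on U (phi k)) ->
  (forall k : 'I_m, k.+1 = m -> forall x, phi k x = 1) ->
  open M ->
  (forall p, M p -> forall j, (j < n)%N ->
       U (@crd R n m alpha j p, @crd R n m alpha (mu_idx n j) p)) ->
  (forall p, M p -> forall j, (j < n)%N -> @curve_eq R n m alpha nk phi0 phi h p j) ->
  (forall p, M p -> @nondeg_system R n m alpha nk phi p) ->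
  forall (k : 'I_m) (i j : nat), (i < j <= alpha)%N ->
  forall p, M p ->
  [/\ @pis R n m alpha h i (@Hk R n m alpha h k (- (i%:Z))) p = 0,
      (forall r, (1 <= r <= nk k)%N ->
         @pis R n m alpha h i (@Hk R n m alpha h k (r%:Z - i%:Z)) p = @Xf R n m alpha h k r p
         /\ @Xf R n m alpha h k r p = @pis R n m alpha h j (@Hk R n m alpha h k (r%:Z - j%:Z)) p)
    & @pis R n m alpha h j (@Hk R n m alpha h k ((nk k)%:Z + 1 - j%:Z)) p = 0].
Proof.
move=> _ _ nk_gt0 sum_nk _ nk_ge_alpha _ phi0_smooth phi_smooth _ M_open nodes_in_U
  curve nondeg k i j ij p Mp.
have phi_diff k' x : U x -> differentiable (phi k') x := (phi_smooth k' 1%N).1 x.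
have phi0_diff x : U x -> differentiable phi0 x := (phi0_smooth 1%N).1 x.
exact: (bihamiltonian_chain sum_nk phi_diff phi0_diff M_open nodes_in_U curve nondeg
  nk_ge_alpha nk_gt0 k ij Mp).
Qed.
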